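(* Let $d \ge 4$. Then \[ \tau_d \ge \frac{1}{(d+1)(s_d-1)^2}. \]
   Context: For $d \ge 1$, $\tau_d$ is the minimum of $\beta_1\beta_2\cdots\beta_d$ over all $(\beta_1,\dots,\beta_{d+1}) \in \mathbb{R}^{d+1}$ satisfying $\beta_1 \ge \cdots \ge \beta_{d+1} \ge 0$, $\beta_1+\cdots+\beta_{d+1}=1$, and, for every $t \in \{1,\dots,d\}$, $\prod_{i=1}^t (\beta_i - \beta_{d+1}) \le \sum_{j=t+1}^{d+1} (\beta_j - \beta_{d+1}) + (d+1)\beta_{d+1}$. The Sylvester sequence is defined by $s_1 := 2$ and $s_i := 1 + s_1 s_2 \cdots s_{i-1}$ for $i \ge 2$. *)

From HB Require Import structures.
From mathcomp Require Import all_boot all_order all_algebra.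
From mathcomp Require Import boolp classical_sets reals.
Set Implicit Arguments. Unset Strict Implicit. Unset Printing Implicit Defensive.
Import Order.TTheory GRing.Theory Num.Theory.
Local Open Scope ring_scope.

(* Sylvester sequence (1-indexed): s_1 = 2, s_i = 1 + s_1 ... s_(i-1).
   sylv_prod n = s_1 * ... * s_n, and s_(n+1) = sylv_prod n + 1. *)
Fixpoint sylv_prod (n : nat) : nat :=
  match n with
  | 0 => 1
  | n.+1 => (sylv_prod n * (sylv_prod n + 1))%N
  end.
Definition sylv (i : nat) : nat := (sylv_prod i.-1 + 1)%N.

Lemma sylv_prodE n : sylv_prod n = (\prod_(1 <= k < n.+1) sylv k)%N.
Proof.
elim: n => [|n IH]; first by rewrite big_geq.
by rewrite big_nat_recr //= IH /sylv /= -IH.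
Qed.

Lemma sylv1 : sylv 1 = 2%N. Proof. by []. Qed.
Lemma sylv_rec i : (2 <= i)%N -> sylv i = (1 + \prod_(1 <= k < i) sylv k)%N.
Proof.
case: i => [|[|i]] // _.
by rewrite {1}/sylv sylv_prodE addnC.
Qed.

(* Feasibility of beta = (beta_1,...,beta_(d+1)), stored 0-indexed:
   paper's beta_i is (b (i-1)), so beta_(d+1) is (b ord_max). *)
Definition tau_feasible {R : realType} (d : nat) (b : 'I_d.+1 -> R) : Prop :=
  [/\ (forall i j : 'I_d.+1, (i <= j)%N -> b j <= b i),
      0 <= b ord_max,
      \sum_(i < d.+1) b i = 1 &
      forall t : nat, (1 <= t <= d)%N ->
        \prod_(i < d.+1 | (i < t)%N) (b i - b ord_max)
        <= \sum_(j < d.+1 | (t <= j)%N) (b j - b ord_max)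
           + d.+1%:R * b ord_max].

(* tau_d = min of beta_1 * ... * beta_d over feasible beta
   (taken as the infimum of the set of attained values; the minimum
    is attained by compactness, so the two coincide). *)
Definition tau {R : realType} (d : nat) : R :=
  inf [set x : R | exists b : 'I_d.+1 -> R,
         tau_feasible b /\ x = \prod_(i < d.+1 | (i < d)%N) b i].

From HB Require Import structures.
From mathcomp Require Import all_boot all_order all_algebra.
From mathcomp Require Import boolp classical_sets reals.
From mathcomp Require Import ring lra zify.
Import Order.TTheory GRing.Theory Num.Theory.
Local Open Scope ring_scope.

(* Write c for the last coordinate and x_i := beta_i - c.  The constraints say
   that the product of the first t of the x_i never exceeds the residual mass
   1 - (x_1 + ... + x_t).  The Sylvester reciprocals 1/s_1, 1/s_2, ... meet all
   these constraints with equality, and they are extremal: if the partial sums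
   of x ever overtook theirs, the tail sums of x would dominate theirs, and by
   Abel summation and AM-GM a nonincreasing positive sequence whose tail sums
   dominate those of another has the larger product, contradicting the
   constraint.  So the residual after t steps is at least 1/(s_1 ... s_t);
   for t = d this forces c > 0.  These residual bounds then say that the tail
   sums of 1/s_1, ..., 1/s_(d-1), 1/(s_d - 1) are dominated by those of
   beta_1, ..., beta_(d-1) with (d+1) beta_d inserted in sorted position, and
   the same product comparison gives (d+1) beta_1 ... beta_d >= (s_d - 1)^-2. *)

Lemma sylv_prod_gt0 n : (0 < sylv_prod n)%N.
Proof. by elim: n => //= n IH; rewrite muln_gt0 IH addn1. Qed.

Lemma sylv_prod_ge k : (2 <= k)%N -> (k.+2 <= sylv_prod k)%N.
Proof.
elim: k => // k IH; rewrite leq_eqVlt => /orP[/eqP <- // | /IH {}IH] /=.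
nia.
Qed.

Lemma sum_drop_map_iota {V : nmodType} (f : nat -> V) n k :
  \sum_(v <- drop k [seq f i | i <- iota 0 n]) v = \sum_(k <= i < n) f i.
Proof. by rewrite -map_drop drop_iota add0n big_map. Qed.

Lemma prod_map_iota {S : pzSemiRingType} (f : nat -> S) n :
  \prod_(v <- [seq f i | i <- iota 0 n]) v = \prod_(i < n) f i.
Proof. by rewrite big_map -(big_mkord xpredT) /index_iota subn0. Qed.

Lemma sorted_ge_map_iota {R : numDomainType} (f : nat -> R) n :
  (forall i j, (i <= j < n)%N -> f j <= f i) -> sorted >=%R [seq f i | i <- iota 0 n].
Proof.
move=> f_decr; apply: (@homo_sorted_in _ _ (gtn n)) (iota_sorted 0 n).
  by move=> i j _ jn ij; apply: f_decr; rewrite ij.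
by apply/allP => i; rewrite mem_iota.
Qed.

Section SylvesterReciprocals.
Context {R : realFieldType}.

Definition sylv_rem t : R := (sylv_prod t)%:R^-1.

Lemma sylv_rem0 : sylv_rem 0 = 1.
Proof. by rewrite /sylv_rem invr1. Qed.

Lemma sylv_rem_gt0 t : 0 < sylv_rem t.
Proof. by rewrite invr_gt0 ltr0n sylv_prod_gt0. Qed.

Lemma inv_sylvE t : (sylv t.+1)%:R^-1 = sylv_rem t - sylv_rem t.+1 :> R.
Proof.
have P0 : 0 < (sylv_prod t)%:R :> R by rewrite ltr0n sylv_prod_gt0.
rewrite /sylv_rem /sylv /= natrM natrD; field; lra.
Qed.

Lemma prod_inv_sylv n : \prod_(i < n) (sylv i.+1)%:R^-1 = sylv_rem n.
Proof.
by rewrite /sylv_rem sylv_prodE big_add1 /= big_mkord natr_prod prodfV.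
Qed.

Lemma sum_inv_sylv k n : (k <= n)%N ->
  \sum_(k <= i < n) (sylv i.+1)%:R^-1 = sylv_rem k - sylv_rem n :> R.
Proof.
move=> kn; rewrite (telescope_sumr_eq (fun i => - sylv_rem i) _ kn) => [|i _].
  by rewrite opprK addrC.
by rewrite inv_sylvE opprK addrC.
Qed.

Lemma sylv_rem_succ_le {n k} : (3 <= n)%N -> (k < n)%N ->
  n.+2%:R * sylv_rem k.+1 <= (n - k)%:R * sylv_rem k.
Proof.
move=> n3 kn.
(* This is where d >= 4 is needed: for n = 2 and k = 1 the bound fails. *)
have key : (k.+2 <= (n - k) * sylv_prod k)%N.
  case: k kn => [|[|k]] kn; first by rewrite muln1; lia.
    by rewrite /= muln2; lia.
  have := @sylv_prod_ge k.+2 isT; nia.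
set P := sylv_prod k.
have P0 : 0 < P%:R :> R by rewrite ltr0n sylv_prod_gt0.
rewrite /sylv_rem /= -/P natrM natrD ler_pdivrMr; last by apply: mulr_gt0; lra.
rewrite mulrA divfK ?lt0r_neq0 //.
have : (n.+2 <= (n - k) * (P + 1))%N by nia.
rewrite -(ler_nat R) natrM natrD; lra.
Qed.

Definition sylv_parts n : seq R :=
  rcons [seq (sylv i.+1)%:R^-1 | i <- iota 0 n] (sylv_rem n).

Lemma size_sylv_parts n : size (sylv_parts n) = n.+1.
Proof. by rewrite size_rcons size_map size_iota. Qed.

Lemma sylv_parts_ge0 n : all (>= 0) (sylv_parts n).
Proof.
rewrite all_rcons (ltW (sylv_rem_gt0 n)).
by apply/allP => v /mapP[i _ ->]; rewrite invr_ge0 ler0n.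
Qed.

Lemma sum_drop_sylv_parts n k : (k <= n)%N ->
  \sum_(v <- drop k (sylv_parts n)) v = sylv_rem k.
Proof.
move=> kn; rewrite drop_rcons ?size_map ?size_iota // big_rcons /=.
by rewrite sum_drop_map_iota sum_inv_sylv // subrK.
Qed.

Lemma prod_sylv_parts n : \prod_(v <- sylv_parts n) v = sylv_rem n ^+ 2.
Proof. by rewrite big_rcons /= prod_map_iota prod_inv_sylv expr2. Qed.

End SylvesterReciprocals.

Lemma prod_zip_div {K : fieldType} {ys zs : seq K} :
  size ys = size zs -> 0 \notin zs ->
  \prod_(y <- ys) y = \prod_(p <- zip ys zs) (p.1 / p.2) * \prod_(z <- zs) z.
Proof.
elim: ys zs => [|y ys IH] [|z zs] //=; first by rewrite !big_nil mulr1.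
move=> [sz]; rewrite in_cons negb_or eq_sym => /andP[z0 zs0].
by rewrite !big_cons (IH zs) // mulrACA divfK.
Qed.

Definition insert_at {T : Type} (m : nat) (x : T) (s : seq T) := take m s ++ x :: drop m s.

Lemma perm_insert_at {T : eqType} m (x : T) s : perm_eq (insert_at m x s) (x :: s).
Proof. by rewrite /insert_at -cat1s perm_catCA /= cat_take_drop. Qed.

Lemma drop_insert_at_gt {T : Type} m k (x : T) s : (m <= k)%N -> (m <= size s)%N ->
  drop k.+1 (insert_at m x s) = drop k s.
Proof.
move=> mk ms; rewrite /insert_at drop_cat size_takel // ltnNge (leqW mk) /=.
by rewrite subSn //= drop_drop subnK.
Qed.

Lemma sum_drop_insert_at_le {R : nmodType} m k (x : R) s : (k <= m <= size s)%N ->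
  \sum_(v <- drop k (insert_at m x s)) v = x + \sum_(v <- drop k s) v.
Proof.
case/andP=> km ms; have tm : size (take m s) = m by rewrite size_takel.
rewrite /insert_at drop_cat tm; case: ltnP => [km' | mk].
  have -> : drop k s = drop k (take m s) ++ drop m s.
    by rewrite -{1}(cat_take_drop m s) drop_cat tm km'.
  by rewrite !big_cat big_cons addrCA.
have -> : k = m by apply/eqP; rewrite eqn_leq km mk.
by rewrite subnn drop0 big_cons.
Qed.

Section Majorization.
Context {R : realFieldType}.
Implicit Types (w : R) (ys zs : seq R).

Definition tail_sums_le ys zs :=
  forall k, \sum_(v <- drop k ys) v <= \sum_(v <- drop k zs) v.

Lemma abel_tail_sums ys zs w : size ys = size zs -> sorted >=%R zs ->
  all (> 0) zs -> all (<= w) zs -> tail_sums_le ys zs ->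
  (\sum_(z <- zs) z - \sum_(y <- ys) y) / w
    <= (size zs)%:R - \sum_(p <- zip ys zs) p.1 / p.2.
Proof.
elim: zs ys w => [|z zs IH] [|y ys] //= w.
  by move=> *; rewrite !big_nil subrr mul0r.
move=> [sz] zs_sorted /andP[z0 zs0] /andP[zw _] tails.
have gap0 : 0 <= \sum_(v <- z :: zs) v - \sum_(v <- y :: ys) v.
  by rewrite subr_ge0; exact: (tails 0%N).
have zs_le_z : all (<= z) zs by exact: order_path_min ge_trans zs_sorted.
have := IH ys z sz (path_sorted zs_sorted) zs0 zs_le_z (fun k => tails k.+1).
rewrite !big_cons /= -natr1 => IHz.
apply: (@le_trans _ _ ((z + \sum_(v <- zs) v - (y + \sum_(v <- ys) v)) / z)).
  by rewrite !big_cons in gap0; rewrite ler_wpM2l // lef_pV2 ?posrE // (lt_le_trans z0).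
have -> : (z + \sum_(v <- zs) v - (y + \sum_(v <- ys) v)) / z
          = 1 - y / z + (\sum_(v <- zs) v - \sum_(v <- ys) v) / z.
  by field; rewrite lt0r_neq0.
lra.
Qed.

Lemma sum_ratio_le_size ys zs : size ys = size zs -> sorted >=%R zs ->
  all (> 0) zs -> tail_sums_le ys zs ->
  \sum_(p <- zip ys zs) p.1 / p.2 <= (size zs)%:R.
Proof.
case: zs => [|z zs] sz zs_sorted zs0 tails.
  by case: ys sz tails => // _ _; rewrite big_nil.
have z0 : 0 < z by case/andP: zs0.
have zs_le_z : all (<= z) (z :: zs) by rewrite /= lexx; exact: order_path_min ge_trans zs_sorted.
have gap0 : 0 <= (\sum_(v <- z :: zs) v - \sum_(v <- ys) v) / z.
  by rewrite divr_ge0 ?(ltW z0) // subr_ge0; have := tails 0%N; rewrite !drop0.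
have := abel_tail_sums ys (z :: zs) z sz zs_sorted zs0 zs_le_z tails; lra.
Qed.

Lemma prod_le1_of_sum_le_size (rs : seq R) : all (>= 0) rs ->
  \sum_(r <- rs) r <= (size rs)%:R -> \prod_(r <- rs) r <= 1.
Proof.
move=> rs0 sum_le; have [->|rs_nil] := eqVneq rs [::]; first by rewrite big_nil.
have n0 : 0 < (size rs)%:R :> R by rewrite ltr0n lt0n size_eq0.
have := @leif_AGM R 'I_(size rs) predT (nth 0 rs).
rewrite cardT size_enum_ord -!(big_mkord predT (nth 0 rs)) -!(big_nth 0 predT id).
move=> /(_ _) [| AGM _]; first by move=> i _; apply: (allP rs0); exact: mem_nth.
apply: le_trans AGM _; apply: exprn_ile1.
  by rewrite divr_ge0 ?(ltW n0) // big_seq sumr_ge0 // => r /(allP rs0).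
by rewrite ler_pdivrMr // mul1r.
Qed.

Lemma prod_le_of_tail_sums ys zs : size ys = size zs -> sorted >=%R zs ->
  all (> 0) zs -> all (>= 0) ys -> tail_sums_le ys zs ->
  \prod_(y <- ys) y <= \prod_(z <- zs) z.
Proof.
move=> sz zs_sorted zs0 ys0 tails.
have zsP z : z \in zs -> 0 < z by move/(allP zs0).
rewrite (prod_zip_div sz); last by apply/negP => /zsP; rewrite ltxx.
apply: ler_piMl; first by rewrite big_seq prodr_ge0 // => z /zsP /ltW.
rewrite -(big_map (fun p => p.1 / p.2) predT id).
apply: prod_le1_of_sum_le_size.
  apply/allP => _ /mapP[p p_in ->]; rewrite divr_ge0 //.
    by apply: (allP ys0); rewrite -(unzip1_zip (eq_leq sz)); exact: map_f.
  by apply/ltW/zsP; rewrite -(unzip2_zip (eq_leq (esym sz))); exact: map_f.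
by rewrite big_map size_map size_zip sz minnn; exact: sum_ratio_le_size.
Qed.

Lemma all_drop_find_lt (s : seq R) L : sorted >=%R s ->
  all (<= L) (drop (find (< L) s) s).
Proof.
elim: s => //= a s IH a_s; case: ifP => [aL | _] /=; last exact/IH/(path_sorted a_s).
rewrite (ltW aL) /=; apply: sub_all (order_path_min ge_trans a_s) => v /= va.
exact: le_trans va (ltW aL).
Qed.

Lemma sorted_insert_at_find (s : seq R) L : sorted >=%R s ->
  sorted >=%R (insert_at (find (< L) s) L s).
Proof.
move=> s_sorted; set m := find _ s.
have take_ge : all (>= L) (take m s).
  have := has_take_leq (< L) (find_size (< L) s); rewrite -/m ltnn => /negbT.
  by rewrite -all_predC; apply: sub_all => v /=; rewrite -leNgt.
have := s_sorted; rewrite !sorted_pairwise; try exact: ge_trans.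
rewrite -{1}(cat_take_drop m s) !pairwise_cat allrel_consr pairwise_cons.
case/and3P=> -> -> ->; rewrite take_ge !andbT; exact: all_drop_find_lt.
Qed.

Lemma prod_le_insert_of_tail_sums (ys s : seq R) L :
  size ys = (size s).+1 -> sorted >=%R s -> all (> 0) s -> 0 < L -> all (>= 0) ys ->
  (forall k, (k <= size s)%N ->
     \sum_(v <- drop k ys) v <= L + \sum_(v <- drop k s) v) ->
  (forall k, (k < size s)%N -> \sum_(v <- drop k.+1 ys) v <= \sum_(v <- drop k s) v) ->
  \prod_(y <- ys) y <= L * \prod_(v <- s) v.
Proof.
move=> sz s_sorted s0 L0 ys0 tails_le tails_lt.
set m := find (< L) s; have ms : (m <= size s)%N by exact: find_size.
have zs_perm := perm_insert_at m L s.
have -> : L * \prod_(v <- s) v = \prod_(z <- insert_at m L s) z.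
  by rewrite (perm_big _ zs_perm) big_cons.
apply: prod_le_of_tail_sums => //.
- by rewrite (perm_size zs_perm) sz.
- exact: sorted_insert_at_find.
- by rewrite (perm_all _ zs_perm) /= L0.
move=> k; case: (leqP k m) => [km | mk].
  by rewrite sum_drop_insert_at_le ?km //; apply: tails_le; exact: leq_trans ms.
case: k mk => // k mk; rewrite drop_insert_at_gt //.
case: (ltnP k (size s)) => [ks | sk]; first exact: tails_lt.
by rewrite !drop_oversize ?sz.
Qed.

End Majorization.

Lemma sylv_rem_le_residual {R : realFieldType} (x : nat -> R) n :
  (forall i, (i < n)%N -> 0 <= x i) ->
  (forall i j, (i <= j < n)%N -> x j <= x i) ->
  (forall t, (0 < t <= n)%N -> \prod_(i < t) x i <= 1 - \sum_(i < t) x i) ->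
  forall k, (k <= n)%N -> sylv_rem (R := R) k <= 1 - \sum_(i < k) x i.
Proof.
move=> x0 x_decr constraint.
elim/ltn_ind => -[_|t IH tn]; first by rewrite sylv_rem0 big_ord0 subr0.
rewrite leNgt; apply/negP => over.
pose y i : R := (sylv i.+1)%:R^-1.
have sum_split j : (j <= t.+1)%N ->
    \sum_(i < t.+1) x i = \sum_(i < j) x i + \sum_(j <= i < t.+1) x i.
  by move=> jt; rewrite -!(big_mkord xpredT) -big_cat_nat.
have rem_decr : sylv_rem (R := R) t.+1 <= sylv_rem (R := R) t.
  by rewrite -subr_ge0 -inv_sylvE invr_ge0 ler0n.
have xt0 : 0 < x t.
  rewrite lt_neqAle x0 // andbT; apply/eqP => xt0.
  move: over; rewrite (sum_split t) // big_nat1 -xt0.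
  have := IH t (ltnSn t) (ltnW tn); lra.
have tails : tail_sums_le [seq y i | i <- iota 0 t.+1] [seq x i | i <- iota 0 t.+1].
  move=> j; rewrite !sum_drop_map_iota.
  case: (ltnP j t.+1) => jt; last by rewrite !big_geq.
  rewrite sum_inv_sylv ?(ltnW jt) //.
  have := IH j jt (leq_trans (ltnW jt) tn); have := sum_split j (ltnW jt); lra.
have prod_le : \prod_(v <- [seq y i | i <- iota 0 t.+1]) v
                <= \prod_(v <- [seq x i | i <- iota 0 t.+1]) v.
  apply: prod_le_of_tail_sums tails; first by rewrite !size_map.
  - apply: sorted_ge_map_iota => i j /andP[ij jt].
    by apply: x_decr; rewrite ij; exact: leq_trans jt tn.
  - apply/allP => v /mapP[i]; rewrite mem_iota => /andP[_ it] ->.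
    by apply: lt_le_trans xt0 (x_decr _ _ _); rewrite -ltnS it.
  - by apply/allP => v /mapP[i _ ->]; rewrite invr_ge0 ler0n.
rewrite !prod_map_iota prod_inv_sylv in prod_le.
have := constraint t.+1 tn; lra.
Qed.

(* The paper's d is n.+1 here; beta i is the paper's beta_(i+1). *)
Section FeasiblePoint.
Context {R : realType} {n : nat} (b : 'I_n.+2 -> R).
Hypothesis n_ge3 : (3 <= n)%N.
Hypothesis b_feasible : tau_feasible b.

Let beta (i : nat) : R := b (inord i).
Let c : R := b ord_max.
Let x (i : nat) : R := beta i - c.

Lemma beta_ord (i : 'I_n.+2) : beta i = b i.
Proof. by rewrite /beta inord_val. Qed.

Lemma beta_decr i j : (i <= j <= n.+1)%N -> beta j <= beta i.
Proof.
case: b_feasible => b_decr _ _ _ /andP[ij jn].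
by apply: b_decr; rewrite !inordK //; exact: leq_ltn_trans ij _.
Qed.

Lemma beta_last : beta n.+1 = c.
Proof. by rewrite /beta /c; congr b; apply: val_inj; rewrite /= inordK. Qed.

Lemma c_ge0 : 0 <= c.
Proof. by case: b_feasible. Qed.

Lemma c_le_beta i : (i <= n.+1)%N -> c <= beta i.
Proof. by move=> i_le; rewrite -beta_last; apply: beta_decr; rewrite i_le leqnn. Qed.

Lemma sum_x : \sum_(i < n.+1) x i = 1 - n.+2%:R * c.
Proof.
have sum_beta : \sum_(i < n.+1) beta i + c = 1.
  case: b_feasible => _ _ <- _; rewrite [RHS]big_ord_recr /=.
  by congr (_ + _); apply: eq_bigr => i _; rewrite -beta_ord.
rewrite /x sumrB sumr_const card_ord -mulr_natl -natr1; lra.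
Qed.

Lemma prod_x_le t : (0 < t <= n.+1)%N ->
  \prod_(i < t) x i <= 1 - \sum_(i < t) x i.
Proof.
case/andP=> t0 tn; case: b_feasible => _ _ b_sum /(_ t); rewrite t0 tn -/c => /(_ isT).
have prodE : \prod_(i < n.+2 | (i < t)%N) (b i - c) = \prod_(i < t) x i.
  by rewrite (big_ord_widen n.+2 x (leqW tn)); apply: eq_bigr => i _; rewrite /x beta_ord.
have sum_lt : \sum_(i < n.+2 | (i < t)%N) (b i - c) = \sum_(i < t) x i.
  by rewrite (big_ord_widen n.+2 x (leqW tn)); apply: eq_bigr => i _; rewrite /x beta_ord.
have sum_all : \sum_(i < n.+2) (b i - c) = 1 - n.+2%:R * c.
  by rewrite sumrB b_sum sumr_const card_ord mulr_natl.
rewrite (bigID (fun j : 'I_n.+2 => (j < t)%N)) /= sum_lt in sum_all.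
rewrite prodE (eq_bigl (fun j : 'I_n.+2 => ~~ (j < t)%N)) => [|j]; last by rewrite -leqNgt.
lra.
Qed.

Lemma residualE k : (k <= n.+1)%N ->
  1 - \sum_(i < k) x i = \sum_(k <= i < n.+1) x i + n.+2%:R * c.
Proof.
move=> kn; have := sum_x; rewrite -!(big_mkord xpredT) (@big_cat_nat _ _ _ k 0 n.+1) //=.
lra.
Qed.

Lemma sylv_rem_le_tail k : (k <= n.+1)%N ->
  sylv_rem k <= \sum_(k <= i < n.+1) x i + n.+2%:R * c.
Proof.
move=> kn; rewrite -residualE //; apply: sylv_rem_le_residual kn.
- by move=> i i_lt; rewrite subr_ge0 c_le_beta // ltnW.
- by move=> i j /andP[ij jn]; rewrite lerD2r beta_decr // ij ltnW.
- exact: prod_x_le.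
Qed.

Lemma c_gt0 : 0 < c.
Proof.
have := @sylv_rem_le_tail n.+1 (leqnn n.+1); rewrite big_geq // add0r.
have := sylv_rem_gt0 (R := R) n.+1; have : 0 < n.+2%:R :> R by [].
nra.
Qed.

Lemma sum_beta k : \sum_(k <= i < n) beta i = \sum_(k <= i < n) x i + (n - k)%:R * c.
Proof. by rewrite /x sumrB sumr_const_nat mulr_natl subrK. Qed.

Lemma sylv_rem_le_beta_tail k : (k <= n)%N ->
  sylv_rem k <= n.+2%:R * beta n + \sum_(k <= i < n) beta i.
Proof.
move=> kn; have := @sylv_rem_le_tail k (leqW kn); rewrite big_nat_recr //= sum_beta.
have : c <= beta n by rewrite c_le_beta.
have : 0 <= (n - k)%:R * c by rewrite mulr_ge0 ?c_ge0.
have : 1 <= n.+2%:R :> R by rewrite ler1n.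
rewrite /x; nra.
Qed.

Lemma sylv_rem_succ_le_beta_tail k : (k < n)%N -> sylv_rem k.+1 <= \sum_(k <= i < n) beta i.
Proof.
move=> kn; rewrite sum_beta.
set D : R := n.+2%:R; set m : R := (n - k)%:R; set Rx := \sum_(k <= i < n) x i.
have := @sylv_rem_le_tail k (leqW (ltnW kn)); rewrite big_nat_recr 1?ltnW //= -/Rx -/D => rem_le.
have succ_le : D * sylv_rem k.+1 <= m * sylv_rem k := sylv_rem_succ_le n_ge3 kn.
have mx_le : m * x n <= Rx.
  rewrite /m mulr_natl -sumr_const_nat; apply: ler_sum_nat => i /andP[ki ni].
  by rewrite /x lerD2r beta_decr // (ltnW ni) leqnSn.
have Rx0 : 0 <= Rx.
  rewrite /Rx big_nat_cond sumr_ge0 // => i /andP[/andP[_ ni] _].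
  by rewrite /x subr_ge0 c_le_beta // leqW // ltnW.
have mD : m + 1 <= D by rewrite /m /D natr1 ler_nat; lia.
have m0 : 0 <= m by [].
have D0 : 0 < D by [].
rewrite -(ler_pM2l D0); nra.
Qed.

Lemma prod_beta_ge : sylv_rem n ^+ 2 <= n.+2%:R * \prod_(i < n.+1) beta i.
Proof.
have beta_gt0 i : (i <= n.+1)%N -> 0 < beta i.
  by move=> i_le; apply: lt_le_trans c_gt0 (c_le_beta _ i_le).
rewrite big_ord_recr /= -(prod_map_iota beta) [_ * beta n]mulrC mulrA -prod_sylv_parts.
apply: prod_le_insert_of_tail_sums.
- by rewrite size_sylv_parts size_map size_iota.
- apply: sorted_ge_map_iota => i j /andP[ij jn].
  by apply: beta_decr; rewrite ij leqW // ltnW.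
- apply/allP => v /mapP[i]; rewrite mem_iota => /andP[_ i_lt] ->.
  by rewrite beta_gt0 // leqW // ltnW.
- by rewrite mulr_gt0 ?beta_gt0.
- exact: sylv_parts_ge0.
- move=> k; rewrite size_map size_iota => kn.
  by rewrite sum_drop_sylv_parts // sum_drop_map_iota sylv_rem_le_beta_tail.
- move=> k; rewrite size_map size_iota => kn.
  by rewrite sum_drop_sylv_parts // sum_drop_map_iota sylv_rem_succ_le_beta_tail.
Qed.

End FeasiblePoint.

Lemma tau_feasible_uniform (R : realType) d :
  tau_feasible (fun _ : 'I_d.+1 => (d.+1%:R : R)^-1).
Proof.
have D0 : (d.+1%:R : R) != 0 by rewrite pnatr_eq0.
split=> //; first by rewrite invr_ge0 ler0n.
  by rewrite sumr_const card_ord -[_ *+ d.+1]mulr_natr mulVf.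
move=> t /andP[t1 _]; rewrite [X in _ <= X + _]big1 => [|j _]; last by rewrite subrr.
by rewrite (bigD1 ord0) //= subrr mul0r add0r mulfV.
Qed.

Lemma tau_feasible_prod_ge (R : realType) d (b : 'I_d.+1 -> R) : (4 <= d)%N ->
  tau_feasible b ->
  1 / (d.+1%:R * ((sylv d)%:R - 1) ^+ 2) <= \prod_(i < d.+1 | (i < d)%N) b i.
Proof.
case: d b => // n b n_ge3 b_feasible.
have -> : \prod_(i < n.+2 | (i < n.+1)%N) b i = \prod_(i < n.+1) b (inord i).
  rewrite (big_ord_widen n.+2 (fun i => b (inord i))) //.
  by apply: eq_bigr => i _; rewrite inord_val.
have := prod_beta_ge b n_ge3 b_feasible.
set X := \prod_(i < n.+1) _; set D : R := n.+2%:R.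
rewrite /sylv_rem /sylv /= natrD addrK; set P : R := (sylv_prod n)%:R.
have P0 : 0 < P by rewrite ltr0n sylv_prod_gt0.
rewrite exprVn -div1r ler_pdivrMr ?exprn_gt0 // => bound.
by rewrite ler_pdivrMr ?mulr_gt0 ?exprn_gt0 // mulrCA mulrA; exact: bound.
Qed.

Theorem lemma4p1 (R : realType) (d : nat) (hd : (4 <= d)%N) :
  1 / (d.+1%:R * ((sylv d)%:R - 1) ^+ 2) <= tau (R := R) d.
Proof.
apply: lb_le_inf => [|_ [b [b_feasible ->]]]; last exact: tau_feasible_prod_ge.
by eexists; exists (fun _ => d.+1%:R^-1); split; first exact: tau_feasible_uniform.
Qed.
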